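(* Let $n,t,k$ be integers with $n\geq 2t\geq 2$ and $k\geq 2$. Then \[P_k(n,t)\leq P_k(t)\,A_k(n-2t,0^t),\] where $0^t$ denotes the word consisting of $t$ zeros.
   Context: Words are over $\Sigma_k=\{0,1,\ldots,k-1\}$. A border of a word $w$ is a non-empty word that is both a proper prefix and a proper suffix of $w$. A word $w$ is closed by a word $u$ if $u$ is a border of $w$ and $u$ occurs exactly twice in $w$ as a factor (overlapping occurrences counted). A word $w$ is privileged if $|w|\leq 1$ or if $w$ is closed by some privileged word. $P_k(m)$ denotes the number of privileged words of length $m$ over $\Sigma_k$, and $P_k(n,t)$ denotes the number of privileged words of length $n$ over $\Sigma_k$ that are closed by a privileged word of length $t$. $A_k(m,v)$ denotes the number of words of length $m$ over $\Sigma_k$ that do not contain $v$ as a factor (for $m=0$ the empty word is counted). *)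

From mathcomp Require Import all_boot.
Set Implicit Arguments. Unset Strict Implicit. Unset Printing Implicit Defensive.

Section Words.
Variable T : eqType.

Definition border (u w : seq T) : bool :=
  [&& 0 < size u, size u < size w, prefix u w & suffix u w].

Definition occ (u w : seq T) : nat :=
  count (fun i => take (size u) (drop i w) == u) (iota 0 (size w - size u).+1).

Definition closed_by (w u : seq T) : bool := border u w && (occ u w == 2).

Fixpoint priv_aux (fuel : nat) (w : seq T) : bool :=
  if size w <= 1 then true else
  match fuel with
  | 0 => false
  | f.+1 => has (fun i => closed_by w (take i w) && priv_aux f (take i w))
                (iota 1 (size w).-1)
  end.

Definition privileged (w : seq T) : bool := priv_aux (size w) w.
End Words.

Definition Pk (k m : nat) : nat :=
  #|[set w : m.-tuple 'I_k | privileged (tval w)]|.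

Definition Pknt (k n t : nat) : nat :=
  #|[set w : n.-tuple 'I_k |
      privileged (tval w) &&
      [exists u : t.-tuple 'I_k, closed_by (tval w) (tval u) && privileged (tval u)]]|.

Definition Ak (k m : nat) (v : seq nat) : nat :=
  #|[set w : m.-tuple 'I_k | ~~ infix v (map val (tval w))]|.

(* Write a word closed by u, with |u| = t and 2t <= n, as w = u x u; since u
   occurs exactly twice in w, the middle x avoids u.  Such x are recoded
   injectively into words avoiding 0^t: while reading x, keep the length of
   the longest prefix of u that is a suffix of what has been read, and write
   each letter through the transposition exchanging 0 with the letter that
   would extend this match.  A 0 in the code then means that the match grew
   by one, so t consecutive 0s would complete an occurrence of u in x.  Hence
   w |-> (u, code of x) is injective into privileged words of length t times
   words of length n - 2t avoiding 0^t. *)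
From mathcomp Require Import all_boot zify.
Set Implicit Arguments. Unset Strict Implicit. Unset Printing Implicit Defensive.

Section InfixMap.
Variables (T S : eqType) (f : T -> S).
Hypothesis f_inj : injective f.

Lemma prefix_map s1 s2 : prefix (map f s1) (map f s2) = prefix s1 s2.
Proof. by rewrite !prefixE size_map -map_take (inj_eq (inj_map f_inj)). Qed.

Lemma infix_map s1 s2 : infix (map f s1) (map f s2) = infix s1 s2.
Proof.
elim: s2 => [|a s2 IH]; first by rewrite /= -!size_eq0 size_map.
by rewrite map_cons !infix_consl -map_cons prefix_map IH.
Qed.

End InfixMap.

Section Encoding.
Variables (T : eqType) (z : T) (u : seq T).
Implicit Types p x : seq T.

Definition match_len p := \max_(s < (size u).+1 | suffix (take s u) p) s.

Lemma match_len_spec p : match_len p <= size u /\ suffix (take (match_len p) u) p.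
Proof.
have nonempty : 0 < #|[pred s : 'I_(size u).+1 | suffix (take s u) p]|.
  by apply/card_gt0P; exists ord0; rewrite inE take0 suffix0s.
rewrite /match_len; have [s s_suffix ->] := eq_bigmax_cond (@nat_of_ord _) nonempty.
by split; [rewrite -ltnS ltn_ord | rewrite inE in s_suffix].
Qed.

Lemma match_len_max p s : s <= size u -> suffix (take s u) p -> s <= match_len p.
Proof. by rewrite -ltnS => s_lt; apply: (leq_bigmax_cond (Ordinal s_lt)). Qed.

Lemma match_len_lt p : ~~ infix u p -> match_len p < size u.
Proof.
have [le_size suffix_p] := match_len_spec p.
rewrite ltn_neqAle le_size andbT; apply: contra => /eqP eq_size.
by move: suffix_p; rewrite eq_size take_size; apply: suffixW.
Qed.

Lemma match_len_rcons p : match_len p < size u ->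
  match_len p < match_len (rcons p (nth z u (match_len p))).
Proof.
move=> lt_size; apply: match_len_max => //.
have [_ /suffixP [q p_eq]] := match_len_spec p.
rewrite (take_nth z lt_size); set s := match_len p in p_eq *.
by rewrite [in rcons p _]p_eq rcons_cat suffix_suffix.
Qed.

Definition swap0 c a := if a == c then z else if a == z then c else a.

Lemma swap0K c : involutive (swap0 c).
Proof.
move=> a; rewrite /swap0.
have [->|a_neq_c] := eqVneq a c; first by rewrite eqxx; case: eqVneq.
by have [->|a_neq_z] := eqVneq a z; rewrite ?eqxx // (negbTE a_neq_c) (negbTE a_neq_z).
Qed.

Lemma swap0_inj c : injective (swap0 c).
Proof. exact: inv_inj (swap0K c). Qed.

Lemma swap0_eqz c a : (swap0 c a == z) = (a == c).
Proof.
have swap0_z : swap0 c z = c by rewrite /swap0; case: eqVneq => [->|]; rewrite ?eqxx.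
by rewrite -[z in LHS](swap0K c) swap0_z (inj_eq (@swap0_inj c)).
Qed.

Fixpoint encode p x :=
  if x is a :: x' then swap0 (nth z u (match_len p)) a :: encode (rcons p a) x'
  else [::].

Lemma size_encode p x : size (encode p x) = size x.
Proof. by elim: x p => [|a x IH] p //=; rewrite IH. Qed.

Lemma encode_inj p : injective (encode p).
Proof.
move=> x y; elim: x p y => [|a x IH] p [|b y] //= [/swap0_inj <-].
by move/IH ->.
Qed.

Lemma avoid_cat_take p x j : ~~ infix u (p ++ x) -> ~~ infix u (p ++ take j x).
Proof.
apply: contra => /infix_prefix_trans; apply.
by rewrite prefix_catr // eqxx prefix_take.
Qed.

Lemma match_len_zeros p x j : ~~ infix u (p ++ x) ->
  prefix (nseq j z) (encode p x) -> match_len p + j <= match_len (p ++ take j x).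
Proof.
elim: j p x => [|j IH] p [|a x] avoid_px //=; rewrite ?addn0 ?take0 ?cats0 //.
rewrite eq_sym swap0_eqz => /andP [/eqP a_next zeros_x].
have lt_rcons : match_len p < match_len (rcons p a).
  rewrite a_next match_len_rcons // match_len_lt //.
  by move: (avoid_cat_take 0 avoid_px); rewrite take0 cats0.
rewrite -cat_rcons -cat_rcons in avoid_px *.
by rewrite addnS; apply: leq_trans (IH _ _ avoid_px zeros_x); rewrite ltn_add2r.
Qed.

Lemma encode_avoid p x :
  ~~ infix u (p ++ x) -> ~~ infix (nseq (size u) z) (encode p x).
Proof.
elim: x p => [|a x IH] p avoid_px.
  rewrite infixs0 -size_eq0 size_nseq size_eq0; apply: contra avoid_px => /eqP ->.
  exact: infix0s.
rewrite [encode _ _]/= infix_consl negb_or IH ?cat_rcons // andbT.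
apply/negP => /(match_len_zeros avoid_px).
have := match_len_lt (avoid_cat_take (size u) avoid_px); lia.
Qed.

End Encoding.

Section ClosedWords.
Variable T : eqType.
Implicit Types u w x : seq T.

Lemma occ_ge3 u s1 s2 : 0 < size u -> 3 <= occ u (u ++ s1 ++ u ++ s2 ++ u).
Proof.
move=> u_gt0; rewrite /occ -size_filter; set w := u ++ _.
have occurs_at s s' : w = s ++ u ++ s' ->
    size s \in [seq i <- iota 0 (size w - size u).+1 | take (size u) (drop i w) == u].
  move=> ->; rewrite mem_filter drop_size_cat // take_size_cat // eqxx mem_iota.
  by rewrite !size_cat; lia.
apply: (@uniq_leq_size _ [:: 0; size (u ++ s1); size (u ++ s1 ++ u ++ s2)]).
  by rewrite /= !inE !size_cat /=; lia.
move=> i; rewrite !inE => /or3P [] /eqP ->.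
- exact: (occurs_at [::]).
- by apply: (occurs_at _ (s2 ++ u)); rewrite /w -!catA.
- by apply: (occurs_at _ [::]); rewrite /w -!catA cats0.
Qed.

Lemma closed_by_cat w u : 2 * size u <= size w -> closed_by w u ->
  exists2 x, w = u ++ x ++ u & ~~ infix u x.
Proof.
move=> le_2u_w /andP [/and4P [u_gt0 _ /prefixP [y w_eq] suffix_u] /eqP occ2].
have le_u_y : size u <= size y by move: le_2u_w; rewrite w_eq size_cat; lia.
have y_eq : y = take (size y - size u) y ++ u.
  move: suffix_u; rewrite suffixE w_eq size_cat addKn drop_cat ltnNge le_u_y.
  by move=> /eqP {2}<-; rewrite cat_take_drop.
set x := take _ y in y_eq; exists x; first by rewrite w_eq {1}y_eq.
apply/negP => /infixP [s1 [s2 x_eq]].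
have w_split : w = u ++ s1 ++ u ++ s2 ++ u by rewrite w_eq y_eq x_eq -!catA.
by have := occ_ge3 s1 s2 u_gt0; rewrite -w_split occ2.
Qed.

End ClosedWords.

Section SplitCode.
Variables (k n t : nat).
Local Notation m := (n - 2 * t).
Local Notation word l := (l.-tuple 'I_k.+1).

Definition split_code (w : word n) : word t * word m :=
  (insubd (nseq_tuple t ord0) (take t w),
   insubd (nseq_tuple m ord0) (encode ord0 (take t w) [::] (take m (drop t w)))).

Section Split.
Variables (w : word n) (u : word t) (x : seq 'I_k.+1).
Hypothesis w_eq : tval w = u ++ x ++ u.

Let size_x : size x = m.
Proof.
move/(congr1 size): w_eq; rewrite !size_cat !size_tuple => ->.
by rewrite addnCA addnn -mul2n addnK.
Qed.

Let take_w : take t w = u /\ take m (drop t w) = x.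
Proof. by rewrite w_eq drop_size_cat ?take_size_cat ?size_tuple. Qed.

Lemma split_code_fst : val (split_code w).1 = u.
Proof. by case: take_w => take_u _; rewrite val_insubd take_u size_tuple eqxx. Qed.

Lemma split_code_snd : val (split_code w).2 = encode ord0 u [::] x.
Proof.
by case: take_w => take_u take_x; rewrite val_insubd take_u take_x size_encode size_x eqxx.
Qed.

End Split.

Lemma encode_avoid_zeros (u x : seq 'I_k.+1) : ~~ infix u x ->
  ~~ infix (nseq (size u) 0) (map val (encode ord0 u [::] x)).
Proof.
move=> avoid_x; rewrite -[nseq _ 0]/(nseq _ (val (@ord0 k))) -map_nseq infix_map //.
  exact: encode_avoid.
exact: val_inj.
Qed.

End SplitCode.

Theorem lemma15 (n t k : nat) :
  1 <= t -> 2 * t <= n -> 2 <= k ->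
  Pknt k n t <= Pk k t * Ak k (n - 2 * t) (nseq t 0).
Proof.
move=> _ le_2t_n; case: k => [|k] // _; rewrite /Pknt /Pk /Ak -cardsX.
set W := [set w | _].
have W_split w : w \in W -> exists (u : t.-tuple 'I_k.+1) x,
    [/\ privileged u, tval w = u ++ x ++ u & ~~ infix u x].
  rewrite inE => /andP [_ /existsP [u /andP [closed_wu priv_u]]].
  have [|x w_eq avoid_x] := closed_by_cat _ closed_wu; first by rewrite !size_tuple.
  by exists u, x.
rewrite -(card_in_imset (f := @split_code k n t) (D := W)).
  apply/subset_leq_card/subsetP => _ /imsetP [w /W_split [u [x [priv_u w_eq avoid_x]]] ->].
  rewrite in_setX !inE (split_code_fst w_eq) (split_code_snd w_eq) priv_u /=.
  by rewrite -{1}(size_tuple u) encode_avoid_zeros.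
move=> w1 w2 /W_split [u1 [x1 [_ w1_eq _]]] /W_split [u2 [x2 [_ w2_eq _]]].
move=> /(congr1 (fun c => (val c.1, val c.2))) [].
rewrite (split_code_fst w1_eq) (split_code_fst w2_eq).
rewrite (split_code_snd w1_eq) (split_code_snd w2_eq) => u_eq.
rewrite (val_inj u_eq) => /encode_inj x_eq.
by apply: val_inj; rewrite /= w1_eq w2_eq (val_inj u_eq) x_eq.
Qed.
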